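(* Assume the standing setup and let $p$ be a prime divisor of $N$. Then the elements $$\alpha_{i,j,k}=q_{i,j}(\theta)\,\theta^k,\qquad 1\le i\le m,\ 1\le j\le\ell_i,\ 0\le k<\deg g_i,$$ where $q_{i,j}\in\mathbb Z[x]$ is the quotient of the division of $f$ by $g_i^j$, form a $\mathbb Z_{(p)}$-basis of $\mathbb Z_{(p)}[\theta]$. (In particular they are $\mathbb Z$-linearly independent and the polynomials $q_{i,j}x^k$ are linearly independent modulo $p$.)
   Context: Standing setup: $f\in\mathbb Z[x]$ monic irreducible of degree $n>1$, $\theta\in\overline{\mathbb Q}$ a root; $N>1$ an integer all of whose prime divisors are $>n$; $g_1,\dots,g_m\in\mathbb Z[x]$ monic of positive degree and $\ell_1,\dots,\ell_m$ positive integers with $f\equiv g_1^{\ell_1}\cdots g_m^{\ell_m}\pmod N$, such that for every prime $p\mid N$ the polynomials $\operatorname{red}_p(g_i)$ (reductions mod $p$) are squarefree and pairwise coprime in $\mathbb F_p[x]$. $\mathbb Z_{(p)}$ is the localization of $\mathbb Z$ at $p\mathbb Z$. *)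

From HB Require Import structures.
From mathcomp Require Import all_boot all_order all_algebra all_field.
Set Implicit Arguments. Unset Strict Implicit. Unset Printing Implicit Defensive.
Import Order.TTheory GRing.Theory Num.Theory.
Local Open Scope ring_scope.

Definition Zloc (p : nat) (x : algC) : Prop :=
  exists (a : int) (b : nat), ~~ (p %| b)%N /\ x = a%:~R / b%:R.

Definition ZlocTheta (p : nat) (theta y : algC) : Prop :=
  exists P : {poly algC}, (forall i, Zloc p P`_i) /\ y = P.[theta].

Definition is_Zloc_basis (p : nat) (theta : algC) (I : finType) (v : I -> algC)
  : Prop :=
  [/\ (forall x, ZlocTheta p theta (v x)),
      (forall y, ZlocTheta p theta y ->
         exists c : I -> algC, (forall x, Zloc p (c x)) /\ y = \sum_x c x * v x)
    & (forall c : I -> algC, (forall x, Zloc p (c x)) ->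
         \sum_x c x * v x = 0 -> forall x, c x = 0)].

Definition squarefree_poly (F : fieldType) (P : {poly F}) : Prop :=
  forall d : {poly F}, (d * d %| P) -> (size d <= 1)%N.

Definition redp (p : nat) (P : {poly int}) : {poly 'F_p} :=
  map_poly (fun z : int => z%:~R) P.

Definition polyC_alg (P : {poly int}) : {poly algC} := map_poly (fun z : int => z%:~R) P.

From HB Require Import structures.
From mathcomp Require Import all_boot all_order all_algebra all_field.
From mathcomp Require Import ring zify.
Set Implicit Arguments. Unset Strict Implicit. Unset Printing Implicit Defensive.
Import Order.TTheory GRing.Theory Num.Theory.
Local Open Scope ring_scope.

(* Write h_i for the reduction of g_i mod p, so that f reduces to
   F = \prod_i h_i^(l_i) and q_(i,j) reduces to F / h_i^(j+1).  As the h_i are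
   pairwise coprime, an F_p-relation among the F / h_i^(j+1) x^k yields, for each
   i, a divisibility h_i^(l_i) | \sum_j P_j h_i^(l_i-1-j) with deg P_j < deg h_i,
   which uniqueness of h_i-adic expansions turns into P_j = 0.  There are deg f
   polynomials q_(i,j) x^k, all of degree < deg f, so their integer coefficient
   matrix M is square and p does not divide det M.  The adjugate of M then
   writes each theta^k, k < deg f, as a Z_(p)-combination of the alpha's, and
   reduction mod f handles the higher powers.  Over Q, a vanishing combination
   of the alpha's is a polynomial of degree < deg f vanishing at theta, hence
   zero since f is irreducible, and M is invertible. *)

Section LocalizedIntegers.
Variable p : nat.
Hypothesis p_prime : prime p.

Lemma Zloc_int (z : int) : Zloc p z%:~R.
Proof.
exists z, 1%N; split; last by rewrite divr1.
by rewrite dvdn1; case: eqP p_prime => // ->.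
Qed.

Lemma Zloc_add x y : Zloc p x -> Zloc p y -> Zloc p (x + y).
Proof.
move=> [a [b [pNb ->]]] [c [d [pNd ->]]].
exists (a * d%:Z + c * b%:Z), (b * d)%N; split.
  by rewrite Euclid_dvdM // negb_or pNb pNd.
have b0 : (b%:R : algC) != 0 by rewrite pnatr_eq0; apply: contraNneq pNb => ->.
have d0 : (d%:R : algC) != 0 by rewrite pnatr_eq0; apply: contraNneq pNd => ->.
rewrite natrM rmorphD !rmorphM /=.
by field; rewrite b0 d0.
Qed.

Lemma Zloc_mul x y : Zloc p x -> Zloc p y -> Zloc p (x * y).
Proof.
move=> [a [b [pNb ->]]] [c [d [pNd ->]]].
exists (a * c), (b * d)%N; split.
  by rewrite Euclid_dvdM // negb_or pNb pNd.
by rewrite natrM rmorphM /= invfM mulrACA.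
Qed.

Lemma Zloc_sum (I : finType) (F : I -> algC) :
  (forall i, Zloc p (F i)) -> Zloc p (\sum_i F i).
Proof.
by move=> ZF; apply: big_ind => //; [exact: (Zloc_int 0) | exact: Zloc_add].
Qed.

(* [d^-1 = d / |d|^2] keeps the denominator a natural number. *)
Lemma Zloc_intV (d : int) : ~~ (p %| d)%Z -> Zloc p (d%:~R)^-1.
Proof.
move=> pNd; exists d, (`|d| ^ 2)%N; split; first by rewrite Euclid_dvdX // andbT.
have d0 : (d%:~R : algC) != 0 by rewrite intr_eq0; apply: contraNneq pNd => ->.
rewrite natrX -[(`|d|%N)%:R]/((`|d|%N%:Z)%:~R) abszE -rmorphXn /=.
by rewrite (real_normK (num_real d)) rmorphXn /=; field.
Qed.

Lemma Zloc_ratr x : Zloc p x -> exists r : rat, x = ratr r.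
Proof.
by move=> [a [b [_ ->]]]; exists (a%:~R / b%:R); rewrite fmorph_div rmorph_int rmorph_nat.
Qed.

Definition Zloc_span (I : finType) (v : I -> algC) (y : algC) :=
  exists c : I -> algC, (forall x, Zloc p (c x)) /\ y = \sum_x c x * v x.

Lemma Zloc_span_lincomb (I J : finType) (v : I -> algC) (a y : J -> algC) :
  (forall j, Zloc p (a j)) -> (forall j, Zloc_span v (y j)) ->
  Zloc_span v (\sum_j a j * y j).
Proof.
move=> Za /fin_all_exists[c cP].
exists (fun x => \sum_j a j * c j x); split.
  by move=> x; apply: Zloc_sum => j; apply: Zloc_mul; last by case: (cP j).
under eq_bigr => j _ do rewrite (cP j).2 mulr_sumr.
rewrite exchange_big; apply: eq_bigr => x _.
by rewrite mulr_suml; apply: eq_bigr => j _; rewrite mulrA.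
Qed.

End LocalizedIntegers.

Lemma size_map_poly_leq (aR rR : nzSemiRingType) (phi : aR -> rR)
    (P : {poly aR}) :
  (size (map_poly phi P) <= size P)%N.
Proof. exact: size_poly. Qed.

Lemma size_sum_leq (R : nzSemiRingType) (I : finType) (F : I -> {poly R}) n :
  (forall i, (size (F i) <= n)%N) -> (size (\sum_i F i)%R <= n)%N.
Proof. by move=> sF; apply: leq_trans (size_sum _ _ _) _; apply/bigmax_leqP. Qed.

Lemma dvdp_sum (R : idomainType) (I : finType) (P : pred I) (D : {poly R})
    (T : I -> {poly R}) :
  (forall i, P i -> D %| T i) -> D %| \sum_(i | P i) T i.
Proof. by move=> DT; apply: (big_ind (fun Q => D %| Q)) => // *; rewrite dvdp_add. Qed.

Lemma predn_size_prod_exp (R : idomainType) (I : finType) (h : I -> {poly R})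
    (l : I -> nat) :
  (forall i, h i != 0) ->
  (size (\prod_i h i ^+ l i)).-1 = (\sum_i l i * (size (h i)).-1)%N.
Proof.
move=> h0; suff [] : \prod_i h i ^+ l i != 0 /\
    (size (\prod_i h i ^+ l i)).-1 = (\sum_i l i * (size (h i)).-1)%N by [].
apply: (big_ind2 (fun (P : {poly R}) n => P != 0 /\ (size P).-1 = n))
  => [|P1 n1 P2 n2 [P10 <-] [P20 <-]|i _].
- by rewrite size_poly1 oner_neq0.
- rewrite mulf_neq0 // size_mul //; split=> //.
  by move: P10 P20; rewrite -!size_poly_gt0; lia.
- by rewrite expf_neq0 // size_exp mulnC.
Qed.

Lemma irreducible_root_eq0 (fr R : {poly rat}) (t : algC) :
  irreducible_poly fr -> root (map_poly ratr fr) t ->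
  root (map_poly ratr R) t -> (size R < size fr)%N -> R = 0.
Proof.
move=> [fr_gt1 fr_irr] fr_t R_t sizeR; apply/eqP; apply: contraT => R0.
set G := gcdp fr R.
have G_t : root (map_poly ratr G) t by rewrite gcdp_map root_gcd fr_t R_t.
have sizeG : size G = 1%N.
  apply/eqP; apply: contraT => /fr_irr/(_ (dvdp_gcdl _ _))/eqp_size sizeGfr.
  by have := dvdp_leq R0 (dvdp_gcdr fr R); rewrite -/G sizeGfr leqNgt sizeR.
move/eqP: sizeG => /size_poly1P[c c0 Gc].
by move: G_t; rewrite Gc map_polyC rootC /= fmorph_eq0 (negbTE c0).
Qed.

Lemma polyC_alg_ratr (P : {poly int}) :
  polyC_alg P = map_poly ratr (map_poly intr P : {poly rat}).
Proof. by rewrite -map_poly_comp; apply: eq_map_poly => z /=; rewrite ratr_int. Qed.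

Lemma sum_sigT (R : nmodType) (I : finType) (J : I -> finType)
    (F : {i : I & J i} -> R) :
  \sum_x F x = \sum_i \sum_(y : J i) F (Tagged J y).
Proof.
rewrite (sig_big_dep xpredT (fun _ => xpredT) (fun i y => F (Tagged J y))) /=.
by apply: eq_bigr => -[].
Qed.

Lemma sum_enum_rank (R : nmodType) (I : finType) (F : 'I_#|I| -> R) :
  \sum_(t < #|I|) F t = \sum_x F (enum_rank x).
Proof. by rewrite (reindex _ (onW_bij _ (@enum_rank_bij I))). Qed.

Lemma kernel0_unitmx (F : fieldType) n (M : 'M[F]_n) :
  (forall v : 'rV_n, v *m M = 0 -> v = 0) -> M \in unitmx.
Proof.
move=> ker0; rewrite -row_free_unit -kermx_eq0; apply/eqP/row_matrixP => r.
by rewrite row0; apply: ker0; apply/sub_kermxP; rewrite row_sub.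
Qed.

(* Uniqueness of the [h]-adic expansion, read modulo [h ^+ L]. *)
Lemma dvdp_expansion_eq0 (F : fieldType) (h : {poly F}) (L : nat)
    (P : 'I_L -> {poly F}) :
  h != 0 -> (forall j, size (P j) < size h)%N ->
  h ^+ L %| \sum_(j < L) P j * h ^+ j -> forall j, P j = 0.
Proof.
move=> h0; elim: L P => [|L IH] P sizeP hL j; first by case: j.
have sumS : \sum_(j < L) P (lift ord0 j) * h ^+ (lift ord0 j)
    = h * \sum_(j < L) P (lift ord0 j) * h ^+ j.
  by rewrite mulr_sumr; apply: eq_bigr => i _; rewrite exprS mulrCA.
rewrite big_ord_recl expr0 mulr1 sumS in hL.
have P0 : P ord0 = 0.
  have : h %| P ord0.
    rewrite -(dvdp_addl (P ord0) (dvdp_mulIl h (\sum_(j < L) P (lift ord0 j) * h ^+ j))).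
    by apply: dvdp_trans hL; rewrite dvdp_exp.
  by apply: contraTeq => nzP; rewrite gtNdvdp.
rewrite P0 add0r exprS dvdp_mul2l // in hL.
have := IH _ (fun i => sizeP _) hL.
by case: (unliftP ord0 j) => [j' ->|->].
Qed.

Section CoprimePowers.
Variables (F : fieldType) (m : nat) (h : 'I_m -> {poly F}) (l d : 'I_m -> nat).
Hypothesis size_h : forall i, size (h i) = (d i).+1.
Hypothesis h_coprime : forall i i', i != i' -> coprimep (h i) (h i').

Local Notation cofactor i := (\prod_(i' | i' != i) h i' ^+ l i').

(* [(\prod_i h i ^+ l i) %/ h i ^+ j.+1] when [j < l i]. *)
Definition prod_exp_quot i j := cofactor i * h i ^+ (l i - j.+1).

Lemma dvdp_prod_exp_quot i0 i j : i != i0 -> h i0 ^+ l i0 %| prod_exp_quot i j.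
Proof. by move=> ii0; rewrite dvdp_mulr // (bigD1 i0) 1?eq_sym //= dvdp_mulr. Qed.

Lemma coprimep_cofactor i0 : coprimep (h i0 ^+ l i0) (cofactor i0).
Proof.
apply: (big_ind (coprimep (h i0 ^+ l i0))) => [|x y|i ii0]; first exact: coprimep1.
  by rewrite coprimepMr => -> ->.
by rewrite coprimep_expl // coprimep_expr // h_coprime // eq_sym.
Qed.

Lemma prod_exp_quot_free (c : {i : 'I_m & {j : 'I_(l i) & 'I_(d i)}} -> F) :
  \sum_x c x *: (prod_exp_quot (tag x) (tag (tagged x)) * 'X^(tagged (tagged x)))
    = 0 -> forall x, c x = 0.
Proof.
rewrite sum_sigT => c0 [i0 [j0 k0]].
pose T i := \sum_(y : {j : 'I_(l i) & 'I_(d i)}) c (Tagged _ y) *: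
   (prod_exp_quot i (tag y) * 'X^(tagged y)).
pose P (j : 'I_(l i0)) := \sum_(k < d i0) c (existT _ i0 (existT _ j k)) *: 'X^k.
have h0 : h i0 != 0 by rewrite -size_poly_gt0 size_h.
have dvdT : h i0 ^+ l i0 %| T i0.
  rewrite /T; move: c0; rewrite (bigD1 i0) //= => /eqP; rewrite addr_eq0 => /eqP ->.
  rewrite dvdpNr; apply: dvdp_sum => i ii0.
  apply: dvdp_sum => y _.
  by rewrite -mul_polyC dvdp_mull // dvdp_mulr // dvdp_prod_exp_quot.
have T_expansion :
    T i0 = cofactor i0 * \sum_(j < l i0) P j * h i0 ^+ (l i0 - j.+1).
  rewrite /T sum_sigT mulr_sumr; apply: eq_bigr => j _.
  rewrite /P mulr_suml mulr_sumr; apply: eq_bigr => k _.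
  by rewrite /prod_exp_quot -!mul_polyC; ring.
rewrite T_expansion Gauss_dvdpr ?coprimep_cofactor // in dvdT.
rewrite (reindex_inj rev_ord_inj) /= in dvdT.
have sizeP j : (size (P j) < size (h i0))%N.
  rewrite size_h ltnS size_sum_leq // => k.
  by rewrite (leq_trans (size_scale_leq _ _)) // size_polyXn.
have dvd_rev : h i0 ^+ l i0 %| \sum_(j < l i0) P (rev_ord j) * h i0 ^+ j.
  move: dvdT; congr (_ %| _); apply: eq_bigr => j _.
  by congr (_ * h i0 ^+ _); have := ltn_ord j; rewrite /=; lia.
have := dvdp_expansion_eq0 h0 (fun j => sizeP _) dvd_rev (rev_ord j0).
rewrite rev_ordK => /(congr1 (fun Q : {poly F} => Q`_k0)).
rewrite coef0 coef_sum (bigD1 k0) //= coefZ coefXn eqxx mulr1 big1 ?addr0 //.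
move=> k kk0; rewrite coefZ coefXn.
by case: eqP => [/val_inj k0k | _]; [rewrite k0k eqxx in kk0 | rewrite mulr0].
Qed.

End CoprimePowers.

Section Reduction.
Variable p : nat.
Hypothesis p_prime : prime p.

Lemma redp_eq (P Q : {poly int}) :
  (forall k, (p %| (P - Q)`_k)%Z) -> redp p P = redp p Q.
Proof.
move=> PQ; apply/polyP => k; rewrite !coef_map /=; apply/eqP.
by rewrite -subr_eq0 -intrB -coefB -(dvdz_pcharf (pchar_Fp p_prime)).
Qed.

Lemma size_redp_monic (P : {poly int}) : P \is monic -> size (redp p P) = size P.
Proof. by move=> /monicP P1; rewrite size_map_poly_id0 // P1 oner_neq0. Qed.

End Reduction.

Section CoefficientMatrix.
Variables (I : finType) (q : I -> {poly int}).
Hypothesis size_q : forall x, (size (q x) <= #|I|)%N.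

Definition coef_mx : 'M[int]_#|I| := \matrix_(t, k) (q (enum_val t))`_k.

Lemma size_comb (R : nzRingType) (c : I -> R) :
  (size (\sum_x c x *: map_poly intr (q x))%R <= #|I|)%N.
Proof.
apply: size_sum_leq => x; apply: leq_trans (size_scale_leq _ _) _.
exact: leq_trans (size_map_poly_leq _ _) (size_q x).
Qed.

Lemma coef_mx_comb (R : comNzRingType) (c : I -> R) (k : 'I_#|I|) :
  ((\row_t c (enum_val t)) *m map_mx intr coef_mx) 0 k
    = (\sum_x c x *: map_poly intr (q x))`_k.
Proof.
rewrite !mxE sum_enum_rank coef_sum.
by apply: eq_bigr => x _; rewrite !mxE enum_rankK coefZ coef_map.
Qed.

Lemma coef_mx_comb_eq0 (R : comNzRingType) (c : I -> R) :
  ((\row_t c (enum_val t)) *m map_mx intr coef_mx == 0)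
    = (\sum_x c x *: map_poly intr (q x) == 0).
Proof.
apply/eqP/eqP => [/rowP vM0 | comb0]; last first.
  by apply/rowP => k; rewrite coef_mx_comb comb0 coef0 mxE.
apply/polyP => k; rewrite coef0.
have [lt_kI | le_Ik] := ltnP k #|I|.
  by have := vM0 (Ordinal lt_kI); rewrite coef_mx_comb mxE.
by rewrite nth_default ?(leq_trans (size_comb c)).
Qed.

Lemma coef_mx_free_rat (c : I -> rat) : \det coef_mx != 0 ->
  \sum_x c x *: map_poly intr (q x) = 0 -> forall x, c x = 0.
Proof.
move=> det0 /eqP; rewrite -coef_mx_comb_eq0 => /eqP vM0 x.
have unitM : map_mx (intr : int -> rat) coef_mx \in unitmx.
  by rewrite unitmxE det_map_mx unitfE intr_eq0.
move: vM0 => /(congr1 (mulmx^~ (invmx (map_mx intr coef_mx)))).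
rewrite mulmxK // mul0mx => /rowP/(_ (enum_rank x)).
by rewrite !mxE enum_rankK.
Qed.

Variable p : nat.
Hypothesis p_prime : prime p.
Hypothesis q_free_mod_p :
  forall c : I -> 'F_p, \sum_x c x *: redp p (q x) = 0 -> forall x, c x = 0.

Lemma det_coef_mx_ndvd : ~~ (p %| \det coef_mx)%Z.
Proof.
have : map_mx (intr : int -> 'F_p) coef_mx \in unitmx.
  apply: kernel0_unitmx => v vM0; pose c x := v 0 (enum_rank x).
  have vE : \row_t c (enum_val t) = v by apply/rowP => t; rewrite mxE /c enum_valK.
  move/eqP: vM0; rewrite -vE coef_mx_comb_eq0 => /eqP/q_free_mod_p c0.
  by apply/rowP => t; rewrite !mxE c0.
by rewrite unitmxE det_map_mx unitfE (dvdz_pcharf (pchar_Fp p_prime)).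
Qed.

Lemma det_coef_mx_neq0 : \det coef_mx != 0.
Proof. by apply: contraNneq det_coef_mx_ndvd => ->; rewrite dvdz0. Qed.

End CoefficientMatrix.

Section RootExpansion.
Variables (f : {poly int}) (theta : algC).
Hypotheses (f_monic : f \is monic) (f_root : root (polyC_alg f) theta).

Lemma expr_root_expansion i :
  theta ^+ i = \sum_(j < (size f).-1) (('X^i %% f)`_j)%:~R * theta ^+ j.
Proof.
have sizeXmod : (size ('X^i %% f)%R <= (size f).-1)%N.
  by rewrite -ltnS prednK ?ltn_modp ?size_poly_gt0 monic_neq0.
rewrite -[theta ^+ i]hornerXn -(map_polyXn intr) -/(polyC_alg _).
rewrite {1}(Pdiv.IdomainMonic.divp_eq f_monic 'X^i) /polyC_alg rmorphD rmorphM /=.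
rewrite hornerD hornerM (rootP f_root) mulr0 add0r.
rewrite (horner_coef_wide _ (leq_trans (size_map_poly_leq _ _) sizeXmod)).
by apply: eq_bigr => j _; rewrite coef_map.
Qed.

End RootExpansion.

Section Spanning.
Variables (I : finType) (q : I -> {poly int}) (f : {poly int}) (theta : algC).
Variable p : nat.
Hypothesis size_q : forall x, (size (q x) <= #|I|)%N.
Hypothesis size_f : (size f).-1 = #|I|.
Hypotheses (f_monic : f \is monic) (f_root : root (polyC_alg f) theta).
Local Notation M := (coef_mx q).
Hypotheses (p_prime : prime p) (det_ndvd : ~~ (p %| \det M)%Z).

Local Notation alpha x := (polyC_alg (q x)).[theta].

Lemma col_horner_coef_mx :
  \col_t alpha (enum_val t) = map_mx intr M *m \col_(k < #|I|) theta ^+ k.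
Proof.
apply/colP => t.
rewrite !mxE (horner_coef_wide _ (leq_trans (size_map_poly_leq _ _) (size_q _))).
by apply: eq_bigr => k _; rewrite !mxE coef_map.
Qed.

Lemma det_coef_mx_expr (k : 'I_#|I|) :
  (\det M)%:~R * theta ^+ k = \sum_t (\adj M k t)%:~R * alpha (enum_val t).
Proof.
have := congr1 (mulmx (map_mx intr (\adj M))) col_horner_coef_mx.
rewrite mulmxA -map_mxM mul_adj_mx map_scalar_mx mul_scalar_mx => /colP/(_ k).
by rewrite !mxE => <-; apply: eq_bigr => t _; rewrite !mxE.
Qed.

Lemma Zloc_span_horner y :
  ZlocTheta p theta y -> Zloc_span p (fun x => alpha x) y.
Proof.
have det0 : ((\det M)%:~R : algC) != 0.
  by rewrite intr_eq0; apply: contraNneq det_ndvd => ->; rewrite dvdz0.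
have span_small (k : 'I_#|I|) : Zloc_span p (fun x => alpha x) (theta ^+ k).
  exists (fun x => (\adj M k (enum_rank x))%:~R / (\det M)%:~R).
  split=> [x|] /=.
    by apply: (Zloc_mul p_prime); [apply: (Zloc_int p_prime) | apply: Zloc_intV].
  apply: (mulfI det0); rewrite det_coef_mx_expr // mulr_sumr sum_enum_rank.
  by apply: eq_bigr => x _; rewrite enum_rankK mulrA mulrCA mulfV // mulr1.
have span_expr i : Zloc_span p (fun x => alpha x) (theta ^+ i).
  rewrite (expr_root_expansion f_monic f_root) size_f.
  by apply: (Zloc_span_lincomb p_prime) => // j; apply: (Zloc_int p_prime).
move=> [P [ZP ->]]; rewrite horner_coef.
by apply: (Zloc_span_lincomb p_prime).
Qed.

End Spanning.

Lemma horner_free_rat (I : finType) (q : I -> {poly int}) (f : {poly int})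
    (theta : algC) :
  (forall x, (size (q x) <= #|I|)%N) -> (size f).-1 = #|I| -> f \is monic ->
  irreducible_poly (map_poly intr f : {poly rat}) -> root (polyC_alg f) theta ->
  \det (coef_mx q) != 0 ->
  forall c : I -> rat, \sum_x ratr (c x) * (polyC_alg (q x)).[theta] = 0 ->
  forall x, c x = 0.
Proof.
move=> size_q size_f f_monic f_irr f_root det0 c comb0.
apply: (coef_mx_free_rat size_q det0).
apply: (irreducible_root_eq0 (t := theta) f_irr).
- by rewrite -polyC_alg_ratr.
- rewrite /root rmorph_sum horner_sum -[X in _ == X]comb0; apply/eqP.
  apply: eq_bigr => x _.
  by rewrite /= map_polyZ hornerZ -polyC_alg_ratr.
- rewrite size_map_poly_id0; last by rewrite (monicP f_monic) oner_neq0.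
  by rewrite -[size f]prednK ?size_poly_gt0 ?monic_neq0 // size_f ltnS size_comb.
Qed.

Section QuotientPolynomials.
Variables (f : {poly int}) (m : nat) (g : 'I_m -> {poly int}) (l : 'I_m -> nat).
Variable p : nat.
Hypotheses (f_monic : f \is monic) (g_monic : forall i, g i \is monic).
Hypothesis f_factor_mod_p : redp p f = \prod_i redp p (g i) ^+ l i.
Hypothesis g_coprime_mod_p :
  forall i i', i != i' -> coprimep (redp p (g i)) (redp p (g i')).

Local Notation X := {i : 'I_m & {j : 'I_(l i) & 'I_((size (g i)).-1)}}.

Definition quot_pol (x : X) : {poly int} :=
  (f %/ g (tag x) ^+ (tag (tagged x)).+1) * 'X^(tagged (tagged x)).

Lemma redp_divp_exp i (j : 'I_(l i)) :
  redp p (f %/ g i ^+ j.+1) = prod_exp_quot (fun i => redp p (g i)) l i j.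
Proof.
set G := g i ^+ j.+1.
have G_monic : G \is monic by apply: monic_exp.
have sizeG : size (redp p G) = size G by apply: size_redp_monic.
have fE : redp p f = redp p (f %/ G) * redp p G + redp p (f %% G).
  by rewrite {1}(Pdiv.IdomainMonic.divp_eq G_monic f) /redp rmorphD rmorphM.
have f_factor :
    redp p f = prod_exp_quot (fun i => redp p (g i)) l i j * redp p G + 0.
  rewrite addr0 f_factor_mod_p (bigD1 i) //= /prod_exp_quot /redp rmorphXn.
  by rewrite -mulrA -exprD subnK // mulrC.
have size_mod : (size (redp p (f %% G)) < size (redp p G))%N.
  by rewrite sizeG (leq_ltn_trans (size_map_poly_leq _ _)) // ltn_modp monic_neq0.
rewrite (divpP fE size_mod) (divpP f_factor) // size_poly0 sizeG size_poly_gt0.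
exact: monic_neq0.
Qed.

Lemma card_index : #|{: X}| = (\sum_i l i * (size (g i)).-1)%N.
Proof.
rewrite -sum1_card -(sig_big_dep xpredT (fun _ => xpredT) (fun _ _ => 1%N)) /=.
apply: eq_bigr => i _.
rewrite -(sig_big_dep xpredT (fun _ => xpredT) (fun _ _ => 1%N)) /=.
rewrite (eq_bigr (fun _ => (size (g i)).-1)) => [|j _]; last first.
  by rewrite sum1_card card_ord.
by rewrite sum_nat_const card_ord.
Qed.

Lemma size_f_card : (size f).-1 = #|{: X}|.
Proof.
rewrite card_index -(size_redp_monic p f_monic) f_factor_mod_p predn_size_prod_exp.
  by apply: eq_bigr => i _; rewrite size_redp_monic.
by move=> i; rewrite monic_neq0 // monic_map.
Qed.

Lemma size_quot_pol x : (size (quot_pol x) <= #|{: X}|)%N.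
Proof.
case: x => i [j k]; rewrite -size_f_card /quot_pol /=.
set G := g i ^+ j.+1.
have [->|q0] := eqVneq (f %/ G) 0; first by rewrite mul0r size_poly0.
have G0 : G != 0 by rewrite monic_neq0 // monic_exp.
have deg_le : ((size (g i)).-1 <= (size G).-1)%N by rewrite size_exp leq_pmulr.
have := q0; rewrite -size_poly_gt0 size_divp // => q_gt0.
have arith (k' d D n : nat) :
  (k' < d -> d <= D -> 0 < n - D -> k' + (n - D) <= n.-1)%N by clear -k' d D n; lia.
by rewrite size_mulXn // size_divp //; apply: arith (ltn_ord k) deg_le q_gt0.
Qed.

Lemma horner_quot_pol (theta : algC) x :
  (polyC_alg (quot_pol x)).[theta]
    = (polyC_alg (f %/ g (tag x) ^+ (tag (tagged x)).+1)).[theta]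
      * theta ^+ (tagged (tagged x)).
Proof. by rewrite /polyC_alg rmorphM /= map_polyXn hornerM hornerXn. Qed.

Lemma quot_pol_free_mod_p (c : X -> 'F_p) :
  \sum_x c x *: redp p (quot_pol x) = 0 -> forall x, c x = 0.
Proof.
move=> comb0; apply: (prod_exp_quot_free (h := fun i => redp p (g i))).
- by move=> i; rewrite size_redp_monic // prednK // size_poly_gt0 monic_neq0.
- exact: g_coprime_mod_p.
- rewrite -[RHS]comb0; apply: eq_bigr => x _.
  by rewrite /quot_pol /redp rmorphM /= map_polyXn -/(redp _ _) redp_divp_exp.
Qed.

End QuotientPolynomials.

Theorem lemma4p4
  (f : {poly int}) (theta : algC) (N : nat) (m : nat)
  (g : 'I_m -> {poly int}) (l : 'I_m -> nat) (p : nat) :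
  f \is monic ->
  irreducible_poly (map_poly (fun z : int => z%:~R) f : {poly rat}) ->
  (1 < (size f).-1)%N ->
  root (polyC_alg f) theta ->
  (1 < N)%N ->
  (forall q : nat, prime q -> (q %| N)%N -> ((size f).-1 < q)%N) ->
  (forall i, g i \is monic) ->
  (forall i, (1 < size (g i))%N) ->
  (forall i, (0 < l i)%N) ->
  (forall k : nat, (N%:Z %| (f - \prod_(i < m) g i ^+ l i)`_k)%Z) ->
  (forall q : nat, prime q -> (q %| N)%N ->
     (forall i, squarefree_poly (redp q (g i))) /\
     (forall i i', i != i' -> coprimep (redp q (g i)) (redp q (g i')))) ->
  prime p -> (p %| N)%N ->
  let alpha := fun x : {i : 'I_m & {j : 'I_(l i) & 'I_((size (g i)).-1)}} =>
    (polyC_alg (f %/ g (tag x) ^+ (tag (tagged x)).+1)).[theta]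
      * theta ^+ (tagged (tagged x)) in
  let qpol := fun x : {i : 'I_m & {j : 'I_(l i) & 'I_((size (g i)).-1)}} =>
    (f %/ g (tag x) ^+ (tag (tagged x)).+1) * 'X^(tagged (tagged x)) in
  [/\ is_Zloc_basis p theta alpha,
      (forall c : {i : 'I_m & {j : 'I_(l i) & 'I_((size (g i)).-1)}} -> int,
         \sum_x (c x)%:~R * alpha x = 0 -> forall x, c x = 0)
    & (forall c : {i : 'I_m & {j : 'I_(l i) & 'I_((size (g i)).-1)}} -> 'F_p,
         \sum_x c x *: redp p (qpol x) = 0 -> forall x, c x = 0)].
Proof.
move=> f_monic f_irr _ f_root _ _ g_monic _ _ f_congr g_mod pr_p p_N alpha qpol.
have f_factor : redp p f = \prod_i redp p (g i) ^+ l i.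
  rewrite (redp_eq pr_p (Q := \prod_i g i ^+ l i)) => [|k].
    by rewrite /redp rmorph_prod; apply: eq_bigr => i _; rewrite rmorphXn.
  by apply: dvdz_trans (f_congr k); rewrite dvdzE.
have free_p := quot_pol_free_mod_p g_monic f_factor (g_mod p pr_p p_N).2.
have size_q := size_quot_pol f_monic g_monic f_factor.
have size_f := size_f_card f_monic g_monic f_factor.
have det_ndvd := det_coef_mx_ndvd size_q pr_p free_p.
have free_rat := horner_free_rat size_q size_f f_monic f_irr f_root
  (det_coef_mx_neq0 size_q pr_p free_p).
have sum_alphaE (c : _ -> algC) : \sum_x c x * alpha x
    = \sum_x c x * (polyC_alg (quot_pol f x)).[theta].
  by apply: eq_bigr => x _; rewrite horner_quot_pol.
have free_Zloc c : (forall x, Zloc p (c x)) ->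
    \sum_x c x * alpha x = 0 -> forall x, c x = 0.
  move=> Zc; have /fin_all_exists[r rE] := fun x => Zloc_ratr (Zc x).
  rewrite sum_alphaE; under eq_bigr do rewrite rE.
  by move=> /(free_rat r) r0 x; rewrite rE r0 rmorph0.
split=> //; first split=> // [x|y].
- exists (polyC_alg (quot_pol f x)); split; last exact/esym/horner_quot_pol.
  by move=> k; rewrite coef_map; apply: Zloc_int.
- move=> /(Zloc_span_horner size_q size_f f_monic f_root pr_p det_ndvd)[c [Zc ->]].
  by exists c; rewrite sum_alphaE.
- move=> c /(free_Zloc _ (fun x => Zloc_int pr_p (c x))) c0 x.
  by apply/eqP; rewrite -(intr_eq0 algC) c0.
Qed.
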